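(* Let $p\geq 3$ and let $\Gamma$ be a $p$-hamiltonian graph in normalized form with vertices $v_1,\dots,v_\gamma$. Suppose $\Gamma$ has chords $d_{1,j}$ and $d_{k,l}$ with $1<j<k<l\leq\gamma$, $j\leq\gamma/2$, $j-1\leq\gamma/2-1$, $l-k<\lfloor\gamma/2\rfloor$, $j-1\leq l-k$ and $k-j\leq\gamma+1-l$. Then $k\leq\lfloor\gamma/2\rfloor+1$, and if $\Gamma'$ is the graph obtained by twisting $(d_{1,j},d_{k,l})$ into $(d_{1,k},d_{j,l})$ (i.e. replacing the chord $v_1v_j$ by a chord $v_1v_k$ and the chord $v_kv_l$ by a chord $v_jv_l$), then $\epsilon(\Gamma')<\epsilon(\Gamma)$, where for a normalized $p$-regular hamiltonian graph $\epsilon(\Gamma)=\sum_{d}\big(\lfloor\gamma/2\rfloor-\alpha(d)\big)$, the sum over all chords $d$.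
   Context: A $p$-hamiltonian graph is a finite connected loopless graph (multiple edges allowed), $p$-regular, with at least 2 vertices, containing a hamiltonian cycle $\Delta$. Normalized form: fix $\Delta$, $\gamma=|V(\Gamma)|$, and label vertices $v_1,\dots,v_\gamma$ so that $\Delta$ consists of edges joining $v_i,v_{i+1}$ (indices mod $\gamma$). Chords are the edges not in $\Delta$; $d_{a,b}$ ($a<b$) denotes a chord joining $v_a$ and $v_b$. Its amplitude is $\alpha(d_{a,b})=\min\{b-a,\gamma-b+a\}$. The graph $\Gamma'$ inherits the labeling and hamiltonian cycle of $\Gamma$. *)

From mathcomp Require Import all_boot.
Set Implicit Arguments. Unset Strict Implicit. Unset Printing Implicit Defensive.

(* A normalized hamiltonian multigraph: vertices v_1..v_gamma (as nats 1..gamma),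
   hamiltonian cycle Delta = edges v_i v_{i+1} (indices mod gamma), and a finite
   multiset (list) of chords, each chord d_{a,b} given as the pair (a,b) with a<b. *)

Definition chord_ok (gamma : nat) (d : nat * nat) : bool :=
  [&& 1 <= d.1, d.1 < d.2 & d.2 <= gamma].

(* degree of vertex v: 2 from the hamiltonian cycle (gamma >= 2) plus chord ends *)
Definition degree (chords : seq (nat * nat)) (v : nat) : nat :=
  2 + count (fun d => d.1 == v) chords + count (fun d => d.2 == v) chords.

(* Gamma is a p-hamiltonian graph in normalized form: at least 2 vertices,
   loopless chords between labelled vertices, p-regular. Connectedness is
   automatic from the hamiltonian cycle. *)
Definition p_hamiltonian (p gamma : nat) (chords : seq (nat * nat)) : Prop :=
  2 <= gamma /\ all (chord_ok gamma) chords /\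
  (forall v, 1 <= v <= gamma -> degree chords v = p).

Definition amplitude (gamma : nat) (d : nat * nat) : nat :=
  minn (d.2 - d.1) (gamma - d.2 + d.1).

(* epsilon(Gamma) = sum over chords of (floor(gamma/2) - alpha(d)).
   Each summand is nonnegative since alpha(d) <= floor(gamma/2), so nat
   subtraction is exact here. *)
Definition epsilon (gamma : nat) (chords : seq (nat * nat)) : nat :=
  \sum_(d <- chords) (gamma./2 - amplitude gamma d).

Definition twist (j k l : nat) (chords : seq (nat * nat)) : seq (nat * nat) :=
  (1, k) :: (j, l) :: rem (k, l) (rem (1, j) chords).

(* Twisting replaces the chords d_{1,j}, d_{k,l} by d_{1,k}, d_{j,l}, so
   epsilon drops exactly when alpha(d_{1,j}) + alpha(d_{k,l}) is smaller than
   alpha(d_{1,k}) + alpha(d_{j,l}).  Under the hypotheses, the three chords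
   d_{1,j}, d_{k,l}, d_{1,k} are short (amplitude b - a), because
   l - k >= j - 1 and k - j <= gamma + 1 - l force 2k <= gamma + 2; then the
   inequality reduces to j < k and 2(l - k) < gamma. *)

From mathcomp Require Import all_boot zify.

Set Implicit Arguments.
Unset Strict Implicit.
Unset Printing Implicit Defensive.

Lemma amplitude_le_half gamma a b :
  a <= b <= gamma -> amplitude gamma (a, b) <= gamma./2.
Proof. by rewrite /amplitude /=; lia. Qed.

Lemma amplitude_short gamma a b :
  a <= b <= gamma -> (b - a).*2 <= gamma -> amplitude gamma (a, b) = b - a.
Proof. by rewrite /amplitude /=; lia. Qed.

Lemma epsilon_rem gamma d chords : d \in chords ->
  epsilon gamma chords = gamma./2 - amplitude gamma d + epsilon gamma (rem d chords).
Proof. by move=> chord_d; rewrite /epsilon (perm_big _ (perm_to_rem chord_d)) big_cons. Qed.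

Lemma epsilon_twist_lt gamma chords j k l :
  (1, j) \in chords -> (k, l) \in chords ->
  1 <= j <= l -> 1 < k <= l -> l <= gamma ->
  amplitude gamma (1, j) + amplitude gamma (k, l) <
    amplitude gamma (1, k) + amplitude gamma (j, l) ->
  epsilon gamma (twist j k l chords) < epsilon gamma chords.
Proof.
move=> chord_1j chord_kl /andP[j_gt0 jl] /andP[k_gt1 kl] l_le gain.
have chord_kl' : (k, l) \in rem (1, j) chords.
  move: chord_kl; rewrite (perm_mem (perm_to_rem chord_1j)) inE.
  by case/orP=> // /eqP[k_eq1]; rewrite k_eq1 in k_gt1.
rewrite (epsilon_rem gamma chord_1j) (epsilon_rem gamma chord_kl') /twist /epsilon !big_cons.
have amp_1k : amplitude gamma (1, k) <= gamma./2 by apply: amplitude_le_half; lia.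
have amp_jl : amplitude gamma (j, l) <= gamma./2 by apply: amplitude_le_half; lia.
lia.
Qed.

Lemma twist_vertex_le_half gamma j k l :
  k < l -> l <= gamma -> j - 1 <= l - k -> k - j <= gamma + 1 - l ->
  k <= gamma./2 + 1.
Proof. lia. Qed.

Lemma amplitude_twist_gain gamma j k l :
  1 <= j < k -> k < l <= gamma ->
  (j - 1).*2 <= gamma -> (l - k).*2 < gamma -> k <= gamma./2 + 1 ->
  amplitude gamma (1, j) + amplitude gamma (k, l) <
    amplitude gamma (1, k) + amplitude gamma (j, l).
Proof.
move=> /andP[j_gt0 jk] /andP[kl l_le] short_1j short_kl k_le.
have -> : amplitude gamma (1, j) = j - 1 by apply: amplitude_short; lia.
have -> : amplitude gamma (k, l) = l - k by apply: amplitude_short; lia.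
have -> : amplitude gamma (1, k) = k - 1 by apply: amplitude_short; lia.
by rewrite /amplitude /=; lia.
Qed.

Theorem mainTheorem9 (p gamma : nat) (chords : seq (nat * nat)) (j k l : nat) :
  3 <= p ->
  p_hamiltonian p gamma chords ->
  (1, j) \in chords ->
  (k, l) \in chords ->
  1 < j -> j < k -> k < l -> l <= gamma ->
  j.*2 <= gamma ->
  (j - 1).*2 + 2 <= gamma ->
  l - k < gamma./2 ->
  j - 1 <= l - k ->
  k - j <= gamma + 1 - l ->
  k <= gamma./2 + 1 /\ epsilon gamma (twist j k l chords) < epsilon gamma chords.
Proof.
move=> _ _ chord_1j chord_kl j_gt1 jk kl l_le _ short_1j short_kl long_kl gap_jk.
have k_le := twist_vertex_le_half kl l_le long_kl gap_jk.
split=> //.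
apply: epsilon_twist_lt chord_1j chord_kl _ _ l_le _; try lia.
apply: amplitude_twist_gain k_le; lia.
Qed.
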